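(* Let $(q_0,q_1,\eta_0,\eta_1,U)$ be a restricted attack with respect to the computational basis ($\ket{v_i}=\ket{i}$), with forward isometry $\mathcal{F}$ and vectors $\ket{e},\ket{f}\in\mathcal{H}_E$ as in the context. Let $\mathcal{H}_{A_1}=\mathcal{H}_{A_2}=\mathcal{H}_B=\mathbb{C}^2$. Define the linear map $\mathbf{Rw}:\mathrm{span}\{\ket{00},\ket{11}\}\subseteq\mathcal{H}_{A_1A_2}\to\mathcal{H}_{A_1A_2E}$ by \[ \mathbf{Rw}\ket{00}=\frac{q_0\ket{0}\ket{0}\ket{0}_E+\sqrt{1-q_1^2}\ket{1}\ket{0}\ket{f}}{\sqrt{1-q_1^2+q_0^2}},\qquad \mathbf{Rw}\ket{11}=\frac{\sqrt{1-q_0^2}\ket{0}\ket{1}\ket{e}+q_1\ket{1}\ket{1}\ket{0}_E}{\sqrt{1-q_0^2+q_1^2}} \] (factors ordered $A_1A_2E$; if a denominator vanishes, the corresponding image is an arbitrary unit vector). Set $p_0=\tfrac12(1-q_1^2+q_0^2)$ and $p_1=1-p_0=\tfrac12(1-q_0^2+q_1^2)$. Consider: (SQKD, entanglement version) the state $(I_{A_1}\otimes\mathcal{F})\ket{\Phi^+}_{A_1A_2}$ with $\ket{\Phi^+}=\tfrac{1}{\sqrt2}(\ket{00}+\ket{11})$ and $\mathcal{F}$ acting $A_2\to A_2E$, tensored with $\ket{0}_B$, followed by Bob's operation $O$ on $A_2B$ ($O=I$ for Reflect, $O=\mathrm{CNOT}_{A_2\to B}$ for Measure and Resend), followed by $U$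 on $A_2E$; ($\Pi^*$) Bob prepares $\sqrt{p_0}\ket{000}_{A_1A_2B}+\sqrt{p_1}\ket{110}_{A_1A_2B}$ (Reflect) or $\sqrt{p_0}\ket{000}_{A_1A_2B}+\sqrt{p_1}\ket{111}_{A_1A_2B}$ (Measure and Resend), then $\mathbf{Rw}$ is applied to $A_1A_2$ (producing $A_1A_2E$), then $U$ is applied to $A_2E$. Then $\mathbf{Rw}$ is an isometry, and in each of the two modes (Reflect, Measure and Resend) the final pure state on $A_1A_2BE$ produced by the SQKD version equals that produced by $\Pi^*$. Consequently, if Bob chooses Measure and Resend with the same probability in both protocols, the single-round density operators $\rho_{ABE}$ (SQKD version) and $\sigma_{ABE}$ ($\Pi^*$ under the attack $(p_0,(I_{A_1}\otimes U)\mathbf{Rw})$) coincide.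
   Context: $\mathcal{H}_E$ is a finite-dimensional Hilbert space with fixed orthonormal vectors $\ket 0_E,\ket 1_E$; $\mathbb{D}=\{z\in\mathbb{C}:|z|\le1\}$. A restricted attack with respect to the computational basis is a tuple $(q_0,q_1,\eta_0,\eta_1,U)$ with $q_0,q_1\in[0,1]$, $\eta_0,\eta_1\in\mathbb{D}$ satisfying $q_0\eta_1\sqrt{1-q_1^2}+q_1\overline{\eta_0}\sqrt{1-q_0^2}=0$, and $U$ a unitary on $\mathbb{C}^2\otimes\mathcal{H}_E$. Its forward isometry is $\mathcal{F}:\mathbb{C}^2\to\mathbb{C}^2\otimes\mathcal{H}_E$, $\mathcal{F}\ket{0}=q_0\ket{0}\ket{0}_E+\sqrt{1-q_0^2}\ket{1}\ket{e}$, $\mathcal{F}\ket{1}=\sqrt{1-q_1^2}\ket{0}\ket{f}+q_1\ket{1}\ket{0}_E$, where $\ket{e}=\eta_0\ket{0}_E+\sqrt{1-|\eta_0|^2}\ket{1}_E$ and $\ket{f}=\eta_1\ket{0}_E+\sqrt{1-|\eta_1|^2}\ket{1}_E$. $\mathrm{CNOT}_{A_2\to B}\ket{t}_{A_2}\ket{b}_B=\ket{t}_{A_2}\ket{b\oplus t}_B$. *)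

From HB Require Import structures.
From mathcomp Require Import all_boot all_order all_algebra.
Set Implicit Arguments. Unset Strict Implicit. Unset Printing Implicit Defensive.
Import Order.TTheory GRing.Theory Num.Theory.
Local Open Scope ring_scope.

Section SQKD.
Variables (C : numClosedFieldType) (n : nat).

Definition ind (b : bool) : C := if b then 1 else 0.

(* H_E = C^n; vectors of H_E are coordinate functions *)
Definition Evec := 'I_n -> C.
Definition dotE (u v : Evec) : C := \sum_(x < n) (u x)^* * v x.

(* vectors of H_{A1} (x) H_{A2} (x) H_E ; qubit basis indexed by bool *)
Definition st3 := bool -> bool -> 'I_n -> C.
Definition dot3 (u v : st3) : C :=
  \sum_(a1 : bool) \sum_(a2 : bool) \sum_(x < n) (u a1 a2 x)^* * v a1 a2 x.

(* vectors of H_{A1} (x) H_{A2} (x) H_B (x) H_E (factor order A1 A2 B E) *)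
Definition st4 := bool -> bool -> bool -> 'I_n -> C.

(* operators on C^2 (x) H_E, given by matrix entries  U (t,x) (t',x') *)
Definition opE := bool -> 'I_n -> bool -> 'I_n -> C.

Definition unitary_opE (U : opE) : Prop :=
  (forall j x j' x', \sum_(k : bool) \sum_(g < n) (U k g j x)^* * U k g j' x'
                     = ind ((j == j') && (x == x'))) /\
  (forall j x j' x', \sum_(k : bool) \sum_(g < n) U j x k g * (U j' x' k g)^*
                     = ind ((j == j') && (x == x'))).

Definition orthonormal2 (e0 e1 : Evec) : Prop :=
  [/\ dotE e0 e0 = 1, dotE e1 e1 = 1 & dotE e0 e1 = 0].

Definition restricted_params (q0 q1 eta0 eta1 : C) : Prop :=
  [/\ 0 <= q0 <= 1, 0 <= q1 <= 1, `|eta0| <= 1, `|eta1| <= 1 &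
      q0 * eta1 * sqrtC (1 - q1 ^+ 2) + q1 * eta0^* * sqrtC (1 - q0 ^+ 2) = 0].

(* |e> = eta |0>_E + sqrt(1-|eta|^2) |1>_E *)
Definition vecE (e0 e1 : Evec) (eta : C) : Evec :=
  fun x => eta * e0 x + sqrtC (1 - `|eta| ^+ 2) * e1 x.

(* forward isometry: fwd i = F|i>, a vector of C^2 (x) H_E *)
Definition fwd (q0 q1 : C) (e0 ev fv : Evec) (i : bool) : bool -> Evec :=
  fun t x =>
    if i then sqrtC (1 - q1 ^+ 2) * ind (~~ t) * fv x + q1 * ind t * e0 x
    else q0 * ind (~~ t) * e0 x + sqrtC (1 - q0 ^+ 2) * ind t * ev x.

Definition applyU (U : opE) (psi : st4) : st4 :=
  fun a1 a2 b x => \sum_(k : bool) \sum_(g < n) U a2 x k g * psi a1 k b g.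

Definition cnotA2B (psi : st4) : st4 := fun a1 a2 b x => psi a1 a2 (b (+) a2) x.

(* Bob's operation; mode m = false : Reflect, m = true : Measure and Resend *)
Definition bobO (m : bool) (psi : st4) : st4 := if m then cnotA2B psi else psi.

(* the Rw map; w00, w11 are the "arbitrary unit vectors" used when the
   corresponding denominator vanishes *)
Definition Rw00 (q0 q1 : C) (e0 fv : Evec) (w00 : st3) : st3 :=
  if 1 - q1 ^+ 2 + q0 ^+ 2 == 0 then w00 else
  fun a1 a2 x =>
    (q0 * ind (~~ a1 && ~~ a2) * e0 x + sqrtC (1 - q1 ^+ 2) * ind (a1 && ~~ a2) * fv x)
    / sqrtC (1 - q1 ^+ 2 + q0 ^+ 2).

Definition Rw11 (q0 q1 : C) (e0 ev : Evec) (w11 : st3) : st3 :=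
  if 1 - q0 ^+ 2 + q1 ^+ 2 == 0 then w11 else
  fun a1 a2 x =>
    (sqrtC (1 - q0 ^+ 2) * ind (~~ a1 && a2) * ev x + q1 * ind (a1 && a2) * e0 x)
    / sqrtC (1 - q0 ^+ 2 + q1 ^+ 2).

Definition sqkd_state (q0 q1 : C) (e0 ev fv : Evec) (U : opE) (m : bool) : st4 :=
  applyU U (bobO m (fun a1 a2 b x =>
     ind (~~ b) * sqrtC (2^-1) * fwd q0 q1 e0 ev fv a1 a2 x)).

Definition pistar_state (q0 q1 : C) (e0 ev fv : Evec) (w00 w11 : st3)
    (U : opE) (m : bool) : st4 :=
  let p0 := (1 - q1 ^+ 2 + q0 ^+ 2) / 2 in
  let p1 := (1 - q0 ^+ 2 + q1 ^+ 2) / 2 in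
  applyU U (fun a1 a2 b x =>
     sqrtC p0 * ind (~~ b) * Rw00 q0 q1 e0 fv w00 a1 a2 x
   + sqrtC p1 * ind (b == m) * Rw11 q0 q1 e0 ev w11 a1 a2 x).

Definition round_density (pm : C) (st : bool -> st4) :
    bool -> bool -> bool -> 'I_n -> bool -> bool -> bool -> 'I_n -> C :=
  fun a1 a2 b x a1' a2' b' x' =>
    (1 - pm) * st false a1 a2 b x * (st false a1' a2' b' x')^*
  + pm * st true a1 a2 b x * (st true a1' a2' b' x')^*.

End SQKD.

From HB Require Import structures.
From mathcomp Require Import all_boot all_order all_algebra.
From mathcomp Require Import ring.
Set Implicit Arguments. Unset Strict Implicit. Unset Printing Implicit Defensive.
Import Order.TTheory GRing.Theory Num.Theory.
Local Open Scope ring_scope.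

(* Grouping (I (x) F)|Phi+> by the value of the A2 qubit gives
     1/sqrt2 (q0 |00>|0_E> + sqrt(1-q1^2) |10>|f>)
   + 1/sqrt2 (sqrt(1-q0^2) |01>|e> + q1 |11>|0_E>),
   and the two blocks have squared norms p0 and p1, so they are exactly
   sqrt p0 Rw|00> and sqrt p1 Rw|11> (also when a block, and with it p_i,
   vanishes).  Bob's CNOT sets B to 1 on the second block only, matching the
   Measure-and-Resend preparation of Pi*; applying U to equal states gives
   equal states.  The two columns of Rw live on different values of A2, hence
   are orthogonal. *)

Lemma sqrtC_conj (C : numClosedFieldType) (r : C) : 0 <= r -> (sqrtC r)^* = sqrtC r.
Proof. by move=> r_ge0; rewrite geC0_conj ?sqrtC_ge0. Qed.

Section InnerProducts.
Variables (C : numClosedFieldType) (n : nat).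

Lemma dotEC (u v : Evec C n) : dotE v u = (dotE u v)^*.
Proof.
rewrite /dotE rmorph_sum; apply: eq_bigr => x _.
by rewrite rmorphM /= conjCK mulrC.
Qed.

Lemma dotE_comb2 (a b c d : C) (u v u' v' : Evec C n) :
  dotE (fun x => a * u x + b * v x) (fun x => c * u' x + d * v' x) =
  a^* * c * dotE u u' + a^* * d * dotE u v' + b^* * c * dotE v u' + b^* * d * dotE v v'.
Proof.
rewrite /dotE !mulr_sumr -!big_split /=; apply: eq_bigr => x _.
rewrite !rmorphD !rmorphM /=; ring.
Qed.

Lemma dotE_vecE (e0 e1 : Evec C n) (eta : C) :
  orthonormal2 e0 e1 -> `|eta| <= 1 -> dotE (vecE e0 e1 eta) (vecE e0 e1 eta) = 1.
Proof.
move=> [e00 e11 e01] eta_le1.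
have r_ge0 : 0 <= 1 - `|eta| ^+ 2 by rewrite subr_ge0 exprn_ile1.
rewrite /vecE dotE_comb2 e00 e11 e01 dotEC e01 conjC0 sqrtC_conj //.
by rewrite -expr2 sqrtCK normCK; ring.
Qed.

Lemma dot3E (u v : st3 C n) :
  dot3 u v = \sum_(a1 : bool) \sum_(a2 : bool) dotE (u a1 a2) (v a1 a2).
Proof. by []. Qed.

Lemma dot3_scale (u v : st3 C n) (c d : C) :
  dot3 (fun a1 a2 x => u a1 a2 x * c) (fun a1 a2 x => v a1 a2 x * d)
  = c^* * d * dot3 u v.
Proof.
rewrite /dot3 mulr_sumr; apply: eq_bigr => a1 _; rewrite mulr_sumr.
apply: eq_bigr => a2 _; rewrite mulr_sumr; apply: eq_bigr => x _.
by rewrite rmorphM; ring.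
Qed.

(* [pair_state j a b u v] is  a |0 j>|u> + b |1 j>|v>; the A2 test is written
   [if j then a2 else ~~ a2] so that [Rw00] and [Rw11] unfold to it by conversion. *)
Definition pair_state (j : bool) (a b : C) (u v : Evec C n) : st3 C n :=
  fun a1 a2 x => a * ind C (~~ a1 && (if j then a2 else ~~ a2)) * u x
               + b * ind C (a1 && (if j then a2 else ~~ a2)) * v x.

Lemma dot3_pair_state j a b (u v : Evec C n) :
  dot3 (pair_state j a b u v) (pair_state j a b u v)
  = a^* * a * dotE u u + b^* * b * dotE v v.
Proof.
by case: j; rewrite dot3E !big_bool /pair_state /ind /= !dotE_comb2 ?conjC0 ?conjC1; ring.
Qed.

Lemma dot3_pair_state_orth j a b a' b' (u v u' v' : Evec C n) :
  dot3 (pair_state j a b u v) (pair_state (~~ j) a' b' u' v') = 0.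
Proof.
by case: j; rewrite dot3E !big_bool /pair_state /ind /= !dotE_comb2 ?conjC0 ?conjC1; ring.
Qed.

(* [d] stands for the squared norm of [N]; [w] is the fallback unit vector. *)
Definition normalize (d : C) (w N : st3 C n) : st3 C n :=
  if d == 0 then w else fun a1 a2 x => N a1 a2 x / sqrtC d.

Lemma dot3_normalize (d : C) (w N : st3 C n) :
  0 <= d -> dot3 w w = 1 -> dot3 N N = d ->
  dot3 (normalize d w N) (normalize d w N) = 1.
Proof.
move=> d_ge0 w_unit N_norm; rewrite /normalize; case: eqP => // /eqP d_neq0.
rewrite dot3_scale N_norm geC0_conj ?invr_ge0 ?sqrtC_ge0 //.
by rewrite -expr2 exprVn sqrtCK mulVf.
Qed.

Lemma sqrtC_half_normalize (d : C) (w N : st3 C n) a1 a2 x :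
  0 <= d -> (d = 0 -> N a1 a2 x = 0) ->
  sqrtC (d / 2) * normalize d w N a1 a2 x = sqrtC 2^-1 * N a1 a2 x.
Proof.
rewrite /normalize; case: eqP => [-> _ N0 | /eqP d_neq0 d_ge0 _].
  by rewrite mul0r sqrtC0 mul0r N0 ?mulr0.
have sqrt_d_neq0 : sqrtC d != 0 by rewrite sqrtC_eq0.
rewrite sqrtCM ?nnegrE ?invr_ge0 ?ler0n //.
by field.
Qed.

End InnerProducts.

Section RestrictedAttack.
Variables (C : numClosedFieldType) (n : nat) (q0 q1 : C).
Variables (e0 ev fv : Evec C n) (w00 w11 : st3 C n).
Hypotheses (q0_ge0 : 0 <= q0) (q0_le1 : q0 <= 1) (q1_ge0 : 0 <= q1) (q1_le1 : q1 <= 1).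

Lemma Rw00E : Rw00 q0 q1 e0 fv w00
  = normalize (1 - q1 ^+ 2 + q0 ^+ 2) w00 (pair_state false q0 (sqrtC (1 - q1 ^+ 2)) e0 fv).
Proof. by []. Qed.

Lemma Rw11E : Rw11 q0 q1 e0 ev w11
  = normalize (1 - q0 ^+ 2 + q1 ^+ 2) w11 (pair_state true (sqrtC (1 - q0 ^+ 2)) q1 ev e0).
Proof. by []. Qed.

Let r0_ge0 : 0 <= 1 - q0 ^+ 2. Proof. by rewrite subr_ge0 exprn_ile1. Qed.
Let r1_ge0 : 0 <= 1 - q1 ^+ 2. Proof. by rewrite subr_ge0 exprn_ile1. Qed.

Lemma dot3_Rw00 : dotE e0 e0 = 1 -> dotE fv fv = 1 -> dot3 w00 w00 = 1 ->
  dot3 (Rw00 q0 q1 e0 fv w00) (Rw00 q0 q1 e0 fv w00) = 1.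
Proof.
move=> e0_unit fv_unit w00_unit; rewrite Rw00E.
apply: dot3_normalize => //; first by rewrite addr_ge0 ?exprn_ge0.
by rewrite dot3_pair_state e0_unit fv_unit sqrtC_conj // geC0_conj // -!expr2 sqrtCK; ring.
Qed.

Lemma dot3_Rw11 : dotE ev ev = 1 -> dotE e0 e0 = 1 -> dot3 w11 w11 = 1 ->
  dot3 (Rw11 q0 q1 e0 ev w11) (Rw11 q0 q1 e0 ev w11) = 1.
Proof.
move=> ev_unit e0_unit w11_unit; rewrite Rw11E.
apply: dot3_normalize => //; first by rewrite addr_ge0 ?exprn_ge0.
by rewrite dot3_pair_state e0_unit ev_unit sqrtC_conj // geC0_conj // -!expr2 sqrtCK; ring.
Qed.

Lemma dot3_Rw00_Rw11 :
  (1 - q1 ^+ 2 + q0 ^+ 2 = 0 -> dot3 w00 (Rw11 q0 q1 e0 ev w11) = 0) ->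
  (1 - q0 ^+ 2 + q1 ^+ 2 = 0 -> dot3 (Rw00 q0 q1 e0 fv w00) w11 = 0) ->
  dot3 (Rw00 q0 q1 e0 fv w00) (Rw11 q0 q1 e0 ev w11) = 0.
Proof.
move=> w00_orth w11_orth.
have [d0_eq0 | d0_neq0] := eqVneq (1 - q1 ^+ 2 + q0 ^+ 2) 0.
  by rewrite /Rw00 d0_eq0 eqxx; exact: w00_orth.
have [d1_eq0 | d1_neq0] := eqVneq (1 - q0 ^+ 2 + q1 ^+ 2) 0.
  by rewrite /Rw11 d1_eq0 eqxx; exact: w11_orth.
rewrite Rw00E Rw11E /normalize (negbTE d0_neq0) (negbTE d1_neq0).
by rewrite dot3_scale (dot3_pair_state_orth false) mulr0.
Qed.

Lemma sqrtC_p0_Rw00 a1 a2 x :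
  sqrtC ((1 - q1 ^+ 2 + q0 ^+ 2) / 2) * Rw00 q0 q1 e0 fv w00 a1 a2 x
  = sqrtC 2^-1 * pair_state false q0 (sqrtC (1 - q1 ^+ 2)) e0 fv a1 a2 x.
Proof.
rewrite Rw00E; apply: sqrtC_half_normalize; first by rewrite addr_ge0 ?exprn_ge0.
move/eqP; rewrite paddr_eq0 ?exprn_ge0 // sqrf_eq0 => /andP[/eqP r1_eq0 /eqP q0_eq0].
by rewrite /pair_state r1_eq0 sqrtC0 q0_eq0 !mul0r addr0.
Qed.

Lemma sqrtC_p1_Rw11 a1 a2 x :
  sqrtC ((1 - q0 ^+ 2 + q1 ^+ 2) / 2) * Rw11 q0 q1 e0 ev w11 a1 a2 x
  = sqrtC 2^-1 * pair_state true (sqrtC (1 - q0 ^+ 2)) q1 ev e0 a1 a2 x.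
Proof.
rewrite Rw11E; apply: sqrtC_half_normalize; first by rewrite addr_ge0 ?exprn_ge0.
move/eqP; rewrite paddr_eq0 ?exprn_ge0 // sqrf_eq0 => /andP[/eqP r0_eq0 /eqP q1_eq0].
by rewrite /pair_state r0_eq0 sqrtC0 q1_eq0 !mul0r addr0.
Qed.

Lemma bobO_prepared_pistar m a1 a2 b x :
  bobO m (fun a1 a2 b x => ind C (~~ b) * sqrtC 2^-1 * fwd q0 q1 e0 ev fv a1 a2 x) a1 a2 b x
  = sqrtC ((1 - q1 ^+ 2 + q0 ^+ 2) / 2) * ind C (~~ b) * Rw00 q0 q1 e0 fv w00 a1 a2 x
  + sqrtC ((1 - q0 ^+ 2 + q1 ^+ 2) / 2) * ind C (b == m) * Rw11 q0 q1 e0 ev w11 a1 a2 x.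
Proof.
rewrite [X in _ = X + _]mulrAC [X in _ = _ + X]mulrAC sqrtC_p0_Rw00 sqrtC_p1_Rw11.
by case: m a1 a2 b => [] [] [] []; rewrite /bobO /cnotA2B /fwd /pair_state /ind /=; ring.
Qed.

Lemma sqkd_state_pistar (U : opE C n) m a1 a2 b x :
  sqkd_state q0 q1 e0 ev fv U m a1 a2 b x
  = pistar_state q0 q1 e0 ev fv w00 w11 U m a1 a2 b x.
Proof.
apply: eq_bigr => k _; apply: eq_bigr => g _.
by congr (_ * _); exact: bobO_prepared_pistar.
Qed.

End RestrictedAttack.

Theorem theorem2 (C : numClosedFieldType) (n : nat)
    (e0 e1 : Evec C n) (q0 q1 eta0 eta1 : C) (U : opE C n)
    (w00 w11 : st3 C n) :
  orthonormal2 e0 e1 ->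
  restricted_params q0 q1 eta0 eta1 ->
  unitary_opE U ->
  let ev := vecE e0 e1 eta0 in
  let fv := vecE e0 e1 eta1 in
  let R00 := Rw00 q0 q1 e0 fv w00 in
  let R11 := Rw11 q0 q1 e0 ev w11 in
  (* choice of the arbitrary unit vectors *)
  dot3 w00 w00 = 1 -> dot3 w11 w11 = 1 ->
  (1 - q1 ^+ 2 + q0 ^+ 2 = 0 -> dot3 w00 R11 = 0) ->
  (1 - q0 ^+ 2 + q1 ^+ 2 = 0 -> dot3 R00 w11 = 0) ->
  (* Rw is an isometry *)
  [/\ dot3 R00 R00 = 1, dot3 R11 R11 = 1, dot3 R00 R11 = 0,
  (* in both modes the final states coincide *)
   (forall (m a1 a2 b : bool) (x : 'I_n),
      sqkd_state q0 q1 e0 ev fv U m a1 a2 b x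
      = pistar_state q0 q1 e0 ev fv w00 w11 U m a1 a2 b x) &
  (* hence the single-round density operators coincide *)
   (forall (pm : C), 0 <= pm <= 1 ->
      forall a1 a2 b x a1' a2' b' x',
      round_density pm (sqkd_state q0 q1 e0 ev fv U) a1 a2 b x a1' a2' b' x'
      = round_density pm (pistar_state q0 q1 e0 ev fv w00 w11 U)
          a1 a2 b x a1' a2' b' x')].
Proof.
move=> e01_on [/andP[q0_ge0 q0_le1] /andP[q1_ge0 q1_le1] eta0_le1 eta1_le1 _] _.
move=> ev fv R00 R11 w00_unit w11_unit w00_orth w11_orth.
have [e0_unit _ _] := e01_on.
have states := sqkd_state_pistar e0 ev fv w00 w11 q0_ge0 q0_le1 q1_ge0 q1_le1 U.
split => //.
- exact: dot3_Rw00 (dotE_vecE e01_on eta1_le1) w00_unit.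
- exact: dot3_Rw11 (dotE_vecE e01_on eta0_le1) e0_unit w11_unit.
- exact: dot3_Rw00_Rw11.
- by move=> pm _ a1 a2 b x a1' a2' b' x'; rewrite /round_density !states.
Qed.
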